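(* Let $p$ be a prime, $G$ an abelian $p$-group having a direct summand of the form $X = Y \oplus Z$, and $n$ a positive integer. Suppose either (a) $Y \cong \mathbb{Z}_{p^n}$ and $Z$ is the direct sum of infinitely many copies of $\mathbb{Z}_{p^m}$, where either $n+2 \le m < \omega$ or $m = \infty$; or (b) $Y$ is the direct sum of infinitely many copies of $\mathbb{Z}_{p^n}$ and $Z \cong \mathbb{Z}_{p^\infty}$. Then $G$ is not semi-generalized Bassian.
   Context: All groups are additively written abelian groups; $\mathbb{Z}_{p^k}$ is the cyclic group of order $p^k$ and $\mathbb{Z}_{p^\infty}$ is the quasicyclic (Prüfer) $p$-group. A subgroup $H$ of a group $A$ is essential in $A$ if $H \cap S \neq \{0\}$ for every non-zero subgroup $S$ of $A$. A group $G$ is semi-generalized Bassian if, for every subgroup $H \le G$, the existence of an injective homomorphism $G \to G/H$ implies that $H$ is an essential subgroup of some direct summand of $G$. *)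

(* Abelian groups = zmodType; subgroups = predicates G -> Prop. *)
From mathcomp Require Import all_boot all_algebra.
Set Implicit Arguments. Unset Strict Implicit. Unset Printing Implicit Defensive.
Import GRing.Theory.
Local Open Scope ring_scope.

Section Defs.
Variable G : zmodType.

Definition subgroup (S : G -> Prop) : Prop :=
  S 0 /\ forall x y, S x -> S y -> S (x - y).

Definition internal_sum2 (Y Z X : G -> Prop) : Prop :=
  subgroup Y /\ subgroup Z /\ (forall x, Y x -> Z x -> x = 0) /\
  (forall x, X x <-> exists y z, Y y /\ Z z /\ x = y + z).

Definition direct_summand (K : G -> Prop) : Prop :=
  exists L : G -> Prop, internal_sum2 K L (fun _ => True).

Definition essential (H K : G -> Prop) : Prop :=
  (forall x, H x -> K x) /\
  forall S : G -> Prop, subgroup S -> (forall x, S x -> K x) ->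
    (exists x, S x /\ x <> 0) -> exists x, H x /\ S x /\ x <> 0.

(* An injective homomorphism G -> G/H, given through a choice of coset
   representatives f : G -> G  (x |-> f x + H). *)
Definition inj_hom_to_quotient (H : G -> Prop) (f : G -> G) : Prop :=
  (forall x y, H (f (x + y) - (f x + f y))) /\
  (forall x, H (f x) -> x = 0).

Definition semi_generalized_Bassian : Prop :=
  forall H : G -> Prop, subgroup H ->
    (exists f : G -> G, inj_hom_to_quotient H f) ->
    exists K : G -> Prop, direct_summand K /\ essential H K.

Definition p_group (p : nat) : Prop :=
  forall x : G, exists k : nat, x *+ (p ^ k) = 0.

Definition elt_order (x : G) (N : nat) : Prop :=
  (0 < N)%N /\ x *+ N = 0 /\ forall k, (0 < k < N)%N -> x *+ k <> 0.

Definition cyclic_of_order (C : G -> Prop) (N : nat) : Prop :=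
  exists c : G, elt_order c N /\ forall x, C x <-> exists k : nat, x = c *+ k.

(* C is isomorphic to the Pruefer group Z_{p^oo}: generated by c_1, c_2, ...
   with p c_1 = 0 (c_1 <> 0) and p c_{k+1} = c_k. *)
Definition pruefer (p : nat) (C : G -> Prop) : Prop :=
  exists c : nat -> G, c 0%N = 0 /\ c 1%N <> 0 /\
    (forall k, c k.+1 *+ p = c k) /\
    forall x, C x <-> exists k j : nat, x = c k *+ j.

Definition internal_dsum (I : eqType) (C : I -> G -> Prop) (Z : G -> Prop) : Prop :=
  (forall i, subgroup (C i)) /\
  (forall x, Z x <-> exists (s : seq I) (g : I -> G),
       (forall i, C i (g i)) /\ x = \sum_(i <- s) g i) /\
  (forall (s : seq I) (g : I -> G), uniq s -> (forall i, C i (g i)) ->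
       \sum_(i <- s) g i = 0 -> forall i, i \in s -> g i = 0).

End Defs.

Definition infinite_type (I : Type) : Prop :=
  exists f : nat -> I, injective f.

Definition inf_dsum_of (G : zmodType) (P : (G -> Prop) -> Prop) (Z : G -> Prop) : Prop :=
  exists (I : eqType) (C : I -> G -> Prop),
    infinite_type I /\ internal_dsum C Z /\ forall i, P (C i).

From mathcomp Require Import all_boot all_algebra.
From Stdlib Require Import ClassicalEpsilon.
Set Implicit Arguments. Unset Strict Implicit. Unset Printing Implicit Defensive.
Import GRing.Theory.

(* Write G = L (+) Y (+) Z.  In both cases Y contains an element t of order p
   with <t> meeting p^n G trivially (t = p^(n-1) y for y of order p^n), and
   p^n G contains an element w with p w <> 0; put H = <t + w>.
   Shifting the infinitely many isomorphic summands of Z (case (a)) or of Y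
   (case (b)) along a self-injection of the index set that misses the summand
   containing w (resp. t) gives an injective endomorphism whose image meets
   that summand trivially; together with division by p in Z_(p^oo) in case
   (b), it induces an injective homomorphism G -> G/H.
   Now let H be essential in a summand K of G = K (+) K'.  The K-component of
   t generates a non-zero subgroup of K, which must meet H; as <t> meets p^n G
   trivially, this forces the K-component of w to vanish.  So w lies in K',
   while p w = p (t + w) lies in K: hence p w = 0, a contradiction. *)

Section Subgroups.
Local Open Scope ring_scope.
Variable G : zmodType.
Implicit Types (S : G -> Prop) (x y : G).

Lemma subgroup0 S : subgroup S -> S 0. Proof. by case. Qed.

Lemma subgroupB S x y : subgroup S -> S x -> S y -> S (x - y).
Proof. by case=> _; apply. Qed.

Lemma subgroupN S x : subgroup S -> S x -> S (- x).
Proof. by move=> sS Sx; rewrite -sub0r; apply: subgroupB (subgroup0 sS) Sx. Qed.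

Lemma subgroupD S x y : subgroup S -> S x -> S y -> S (x + y).
Proof. by move=> sS Sx Sy; rewrite -[y]opprK; apply: subgroupB (subgroupN sS Sy). Qed.

Lemma subgroupMn S x m : subgroup S -> S x -> S (x *+ m).
Proof.
move=> sS Sx; elim: m => [|m IHm]; first by rewrite mulr0n; apply: subgroup0.
by rewrite mulrS; apply: subgroupD.
Qed.

Lemma subgroup_sum S (I : Type) (r : seq I) (P : pred I) (F : I -> G) :
  subgroup S -> (forall i, P i -> S (F i)) -> S (\sum_(i <- r | P i) F i).
Proof.
move=> sS SF; apply: (big_ind S) => //; first exact: subgroup0.
by move=> x y; apply: subgroupD.
Qed.

Definition multiples x : G -> Prop := fun y => exists i, y = x *+ i.

Lemma subgroup_multiples x N : (0 < N)%N -> x *+ N = 0 -> subgroup (multiples x).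
Proof.
move=> N_gt0 xN; split=> [|_ _ [i ->] [j ->]]; first by exists 0%N.
exists (i + N.-1 * j)%N; rewrite mulrnDr; congr (_ + _); apply/eqP.
by rewrite eq_sym -addr_eq0 -mulrnDr -mulSnr prednK // mulrnA xN mul0rn.
Qed.

End Subgroups.

Section Orders.
Local Open Scope ring_scope.
Variable G : zmodType.
Implicit Types (x : G).

Lemma mulrn_modn x N u : x *+ N = 0 -> x *+ u = x *+ (u %% N).
Proof. by move=> xN; rewrite {1}(divn_eq u N) mulrnDr mulrnA mulrnAC xN mul0rn add0r. Qed.

Lemma mulrn_dvdn_eq0 x N u : x *+ N = 0 -> (N %| u)%N -> x *+ u = 0.
Proof. by move=> xN /dvdnP[q ->]; rewrite mulrnA mulrnAC xN mul0rn. Qed.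

Lemma mulrn_gcdn_eq0 x a b : x *+ a = 0 -> x *+ b = 0 -> x *+ gcdn a b = 0.
Proof.
have [-> _|a_gt0 xa xb] := posnP a; first by rewrite gcd0n.
have [k _ /(mulrn_dvdn_eq0 xa)] := Bezoutl b a_gt0.
by rewrite mulrnDr mulrnA mulrnAC xb mul0rn addr0.
Qed.

Definition exact_order x N := forall u, x *+ u = 0 <-> (N %| u)%N.

Lemma exact_order_eq x N u v :
  exact_order x N -> x *+ u = x *+ v <-> u = v %[mod N].
Proof.
move=> ox; wlog le_vu : u v / (v <= u)%N.
  move=> W; have [/W //|/ltnW /W Wvu] := leqP v u.
  by split=> /esym /Wvu /esym.
split=> [xuv|/eqP].
  by apply/eqP; rewrite eqn_mod_dvd // -ox mulrnBr // xuv subrr.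
by rewrite eqn_mod_dvd // -ox mulrnBr // => /eqP; rewrite subr_eq0 => /eqP.
Qed.

Lemma exact_order_elt x N : elt_order x N -> exact_order x N.
Proof.
move=> [N_gt0 [xN xk]] u; split=> [xu|]; last exact: mulrn_dvdn_eq0.
apply/negPn/negP => ndvd; apply: (xk (u %% N)%N); first by rewrite lt0n ndvd ltn_pmod.
by rewrite -mulrn_modn.
Qed.

Lemma exact_order_pfactor p k x :
  prime p -> x *+ p ^ k.+1 = 0 -> x *+ p ^ k <> 0 -> exact_order x (p ^ k.+1).
Proof.
move=> p_pr xpk1 xpk u; split=> [xu|]; last exact: mulrn_dvdn_eq0.
have [m le_m gcd_pm] := dvdn_pfactor _ _ p_pr (dvdn_gcdl (p ^ k.+1) u).
have xpm : x *+ p ^ m = 0 by rewrite -gcd_pm; apply: mulrn_gcdn_eq0.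
have [lt_mk1|le_k1m] := ltnP m k.+1.
  by case: xpk; apply: mulrn_dvdn_eq0 xpm _; rewrite dvdn_exp2l.
have -> : k.+1 = m by apply/eqP; rewrite eqn_leq le_k1m le_m.
by rewrite -gcd_pm dvdn_gcdr.
Qed.

Lemma exact_order_prime p x : prime p -> x *+ p = 0 -> x <> 0 -> exact_order x p.
Proof.
by move=> p_pr xp x0; rewrite -[p]expn1; apply: exact_order_pfactor; rewrite ?expn1 ?mulr1n.
Qed.

Lemma pgroup_coprime_eq0 p x i :
  prime p -> p_group G p -> x *+ i = 0 -> ~~ (p %| i)%N -> x = 0.
Proof.
move=> p_pr pG xi ndvd; have [k xpk] := pG x.
have /eqP cop : coprime (p ^ k) i by rewrite coprimeXl // prime_coprime.
by have := mulrn_gcdn_eq0 xpk xi; rewrite cop mulr1n.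
Qed.

Lemma cyclic_of_order_exponent (C : G -> Prop) N :
  cyclic_of_order C N -> forall x, C x -> x *+ N = 0.
Proof. by move=> [c [[_ [cN _]] Cc]] x /Cc [k ->]; rewrite mulrnAC cN mul0rn. Qed.

Lemma cyclic_of_order_gen (C : G -> Prop) N k :
  cyclic_of_order C N -> (0 < k < N)%N -> exists2 y, C y & y *+ k <> 0.
Proof. by move=> [c [[_ [_ ck]] Cc]] k_lt; exists c; [apply/Cc; exists 1%N | apply: ck]. Qed.

End Orders.

Section Spans.
Local Open Scope ring_scope.
Variable G : zmodType.

Definition seq_span (a : nat -> G) : G -> Prop := fun x => exists k j, x = a k *+ j.

Section Pruefer.
Variables (p : nat) (c : nat -> G).
Hypotheses (p_pr : prime p) (c0 : c 0%N = 0) (c1 : c 1%N <> 0).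
Hypothesis cS : forall k, c k.+1 *+ p = c k.

Lemma pruefer_mulrn k j : c (k + j)%N *+ p ^ j = c k.
Proof.
elim: j => [|j IHj]; first by rewrite addn0 mulr1n.
by rewrite addnS expnS mulrnA cS IHj.
Qed.

Lemma pruefer_order k : exact_order (c k) (p ^ k).
Proof.
case: k => [|k]; first by rewrite c0 => u; rewrite mul0rn expn0 dvd1n.
apply: exact_order_pfactor => //.
  by have := pruefer_mulrn 0 k.+1; rewrite add0n c0.
by have := pruefer_mulrn 1 k; rewrite add1n => ->.
Qed.

Lemma pruefer_divisible x : seq_span c x -> exists2 r, seq_span c r & r *+ p = x.
Proof. by move=> [k [j ->]]; exists (c k.+1 *+ j); [exists k.+1, j | rewrite mulrnAC cS]. Qed.

Lemma pruefer_socle x : seq_span c x -> x *+ p = 0 -> multiples (c 1%N) x.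
Proof.
move=> [k [j ->]]; rewrite -mulrnA => /(pruefer_order k).
case: k => [_|k]; first by exists 0%N; rewrite c0 mul0rn mulr0n.
rewrite expnS mulnC dvdn_pmul2r ?prime_gt0 // => /dvdnP[q ->].
by exists q; rewrite mulrnA mulrnAC -add1n pruefer_mulrn.
Qed.

End Pruefer.

Lemma pruefer_gen p (C : G -> Prop) k : pruefer p C -> exists2 v, C v & v *+ p ^ k <> 0.
Proof.
move=> [c [_ [c1 [cS Cc]]]]; exists (c k.+1); first by apply/Cc; exists k.+1, 1%N.
by rewrite -add1n pruefer_mulrn.
Qed.

(* [a] and [b] are generating chains (constant for a cyclic group, a Pruefer
   chain for Z_(p^oo)) of isomorphic groups, and [span_map a b] is the
   isomorphism mapping [a k] to [b k]. *)
Definition same_relations (a b : nat -> G) :=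
  (exists o, forall k, exact_order (a k) (o k) /\ exact_order (b k) (o k)) /\
  (forall k K, (k <= K)%N -> exists r, a k = a K *+ r /\ b k = b K *+ r).

Definition span_map (a b : nat -> G) (x : G) :=
  let kj := epsilon (inhabits (0, 0)%N) (fun kj : nat * nat => x = a kj.1 *+ kj.2) in
  b kj.1 *+ kj.2.

Section SpanMap.
Variables a b : nat -> G.
Hypothesis ab : same_relations a b.

Lemma same_relations_level k k' : exists K r r',
  [/\ a k = a K *+ r, b k = b K *+ r, a k' = a K *+ r' & b k' = b K *+ r'].
Proof.
have [r [ak bk]] := ab.2 k (maxn k k') (leq_maxl _ _).
have [r' [ak' bk']] := ab.2 k' (maxn k k') (leq_maxr _ _).
by exists (maxn k k'), r, r'.
Qed.

Lemma span_map_mulrn k j : span_map a b (a k *+ j) = b k *+ j.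
Proof.
rewrite /span_map; have := epsilon_spec (inhabits (0, 0)%N)
  (fun kj : nat * nat => a k *+ j = a kj.1 *+ kj.2) (ex_intro _ (k, j) erefl).
case: (epsilon _ _) => k' j' /=.
have [o ord] := ab.1; have [K [r [r' [-> -> -> ->]]]] := same_relations_level k k'.
by rewrite -!mulrnA (exact_order_eq _ _ (ord K).1) -(exact_order_eq _ _ (ord K).2).
Qed.

Lemma span_mapD x y : seq_span a x -> seq_span a y ->
  span_map a b (x + y) = span_map a b x + span_map a b y.
Proof.
move=> [k [j ->]] [k' [j' ->]].
have [K [r [r' [-> _ -> _]]]] := same_relations_level k k'.
by rewrite -!mulrnA -mulrnDr !span_map_mulrn mulrnDr.
Qed.

Lemma span_map_in x : seq_span b (span_map a b x).
Proof. by rewrite /span_map; case: (epsilon _ _) => k j; exists k, j. Qed.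

Lemma span_map_inj x : seq_span a x -> span_map a b x = 0 -> x = 0.
Proof.
have [o ord] := ab.1; move=> [k [j ->]]; rewrite span_map_mulrn.
by move/(ord k).2/(ord k).1.
Qed.

End SpanMap.

Lemma same_relations_const (c d : G) N :
  exact_order c N -> exact_order d N -> same_relations (fun=> c) (fun=> d).
Proof. by move=> oc od; split=> [|k K _]; [exists (fun=> N) | exists 1%N]. Qed.

Lemma same_relations_pruefer p (c d : nat -> G) : prime p ->
  c 0%N = 0 -> c 1%N <> 0 -> (forall k, c k.+1 *+ p = c k) ->
  d 0%N = 0 -> d 1%N <> 0 -> (forall k, d k.+1 *+ p = d k) -> same_relations c d.
Proof.
move=> p_pr c0 c1 cS d0 d1 dS; split.
  by exists (fun k => p ^ k)%N => k; split; apply: pruefer_order.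
move=> k K /subnKC <-; exists (p ^ (K - k))%N.
by rewrite (pruefer_mulrn cS) (pruefer_mulrn dS).
Qed.

End Spans.

Lemma subset_undup_catl (T : eqType) (s s' : seq T) : {subset s <= undup (s ++ s')}.
Proof. by move=> x sx; rewrite mem_undup mem_cat sx. Qed.

Lemma subset_undup_catr (T : eqType) (s s' : seq T) : {subset s' <= undup (s ++ s')}.
Proof. by move=> x s'x; rewrite mem_undup mem_cat s'x orbT. Qed.

Section DirectSums.
Local Open Scope ring_scope.
Variable G : zmodType.

Lemma sum_count_mem (I : eqType) (F : I -> G) (s t : seq I) : uniq t -> {subset s <= t} ->
  \sum_(i <- s) F i = \sum_(i <- t) F i *+ count_mem i s.
Proof.
move=> t_uniq; elim: s => [|j s IHs] sub_st.
  by rewrite big_nil big1_seq // => i _; rewrite mulr0n.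
rewrite big_cons IHs => [|i si]; last by rewrite sub_st // inE si orbT.
under [RHS]eq_bigr => i _ do rewrite /= mulrnDr.
rewrite big_split /=; congr (_ + _).
rewrite (bigD1_seq j) ?sub_st ?mem_head //= eqxx mulr1n big1 ?addr0 // => i.
by rewrite eq_sym => /negbTE ->.
Qed.

Variables (I : eqType) (C : I -> G -> Prop) (Z : G -> Prop).
Hypothesis dsumZ : internal_dsum C Z.

Lemma dsum_component_subgroup i : subgroup (C i). Proof. exact: dsumZ.1. Qed.

Definition dsum_rep (z : G) (r : seq I * (I -> G)) :=
  (forall i, C i (r.2 i)) /\ z = \sum_(i <- r.1) r.2 i.

Lemma dsum_repP z : Z z <-> exists r, dsum_rep z r.
Proof.
rewrite (dsumZ.2.1 z); split=> [[s [g rep]]|[[s g] rep]]; first by exists (s, g).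
by exists s, g.
Qed.

Lemma dsum_rep_undup z s g : dsum_rep z (s, g) ->
  dsum_rep z (undup s, fun i => g i *+ count_mem i s).
Proof.
move=> [Cg /= ->]; split=> [i|] /=; first exact: subgroupMn (dsum_component_subgroup i) (Cg i).
by rewrite (sum_count_mem _ (undup_uniq s)) // => i; rewrite mem_undup.
Qed.

Lemma dsum_rep_coord z s g s' g' : dsum_rep z (s, g) -> dsum_rep z (s', g') ->
  {in s ++ s', forall i, g i *+ count_mem i s = g' i *+ count_mem i s'}.
Proof.
move=> [Cg /= zE] [Cg' /= zE'] i ss'i; apply/eqP; rewrite -subr_eq0; apply/eqP.
apply: (dsumZ.2.2 (undup (s ++ s')) (fun i => g i *+ count_mem i s - g' i *+ count_mem i s')).
- exact: undup_uniq.
- move=> j; have sC := dsum_component_subgroup j.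
  by apply: (subgroupB sC); [exact: subgroupMn _ sC (Cg j) | exact: subgroupMn _ sC (Cg' j)].
- rewrite sumrB -(sum_count_mem g (undup_uniq _) (@subset_undup_catl _ s s')).
  by rewrite -(sum_count_mem g' (undup_uniq _) (@subset_undup_catr _ s s')) -zE -zE' subrr.
- by rewrite mem_undup.
Qed.

Lemma dsum_repD z z' s g s' g' : dsum_rep z (s, g) -> dsum_rep z' (s', g') ->
  dsum_rep (z + z') (undup (s ++ s'), fun i => g i *+ count_mem i s + g' i *+ count_mem i s').
Proof.
move=> [Cg /= ->] [Cg' /= ->]; split=> [j|] /=.
  have sC := dsum_component_subgroup j.
  by apply: (subgroupD sC); [exact: subgroupMn _ sC (Cg j) | exact: subgroupMn _ sC (Cg' j)].
rewrite big_split /= -(sum_count_mem g (undup_uniq _) (@subset_undup_catl _ s s')).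
by rewrite -(sum_count_mem g' (undup_uniq _) (@subset_undup_catr _ s s')).
Qed.

Lemma dsum_subgroup : subgroup Z.
Proof.
split=> [|x y /dsum_repP[[s g] xE] /dsum_repP[[s' g'] yE]]; apply/dsum_repP.
  exists ([::], fun=> 0); split=> [i|]; last by rewrite big_nil.
  exact: subgroup0 (dsum_component_subgroup i).
have yNE : dsum_rep (- y) (s', fun i => - g' i).
  case: yE => [Cg' /= ->]; split=> [i|]; last by rewrite /= sumrN.
  exact: subgroupN (dsum_component_subgroup i) (Cg' i).
by eexists; apply: dsum_repD xE yNE.
Qed.

Lemma dsum_component_sub i x : C i x -> Z x.
Proof.
move=> Cx; apply/dsum_repP; exists ([:: i], fun j => if j == i then x else 0).
split=> [j|] /=; last by rewrite big_seq1 eqxx.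
by case: eqP => [->|_] //; apply: subgroup0 (dsum_component_subgroup j).
Qed.

Lemma dsum_exponent N : (forall i x, C i x -> x *+ N = 0) -> forall z, Z z -> z *+ N = 0.
Proof.
move=> CN z /dsum_repP[[s g] [Cg /= ->]].
by rewrite -sumrMnl big1 // => i _; apply: CN (Cg i).
Qed.

Lemma dsum_inj_eq0 (J : eqType) (iota : J -> I) (r : seq J) (g : J -> G) :
  injective iota -> uniq r -> (forall j, C (iota j) (g j)) ->
  \sum_(j <- r) g j = 0 -> {in r, forall j, g j = 0}.
Proof.
move=> iota_inj r_uniq Cg sum0.
pose F i := \sum_(j <- r | iota j == i) g j.
have FE : {in r, forall j, F (iota j) = g j}.
  move=> j rj; rewrite /F (eq_bigl (pred1 j)) => [|k]; last by rewrite /= inj_eq.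
  by rewrite -big_filter filter_pred1_uniq // big_seq1.
move=> j rj; rewrite -FE //; apply: (dsumZ.2.2 (map iota r)).
- by rewrite map_inj_uniq.
- by move=> i; apply: subgroup_sum (dsum_component_subgroup i) _ => k /eqP <-.
- by rewrite big_map (eq_big_seq g FE).
- exact: map_f.
Qed.

Section DsumMap.
Variable ph : I -> G -> G.
Hypothesis phD : forall i x y, C i x -> C i y -> ph i (x + y) = ph i x + ph i y.

Lemma component_mapMn i x m : C i x -> ph i (x *+ m) = ph i x *+ m.
Proof.
have sC := dsum_component_subgroup i; move=> Cx; elim: m => [|m IHm].
  have /eqP := phD (subgroup0 sC) (subgroup0 sC).
  by rewrite addr0 mulr0n -subr_eq subrr eq_sym => /eqP.
by rewrite !mulrS phD ?IHm //; apply: subgroupMn.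
Qed.

Definition dsum_map z :=
  let r := epsilon (inhabits ([::], fun=> 0)) (dsum_rep z) in \sum_(i <- r.1) ph i (r.2 i).

Lemma dsum_map_rep z s g : dsum_rep z (s, g) -> dsum_map z = \sum_(i <- s) ph i (g i).
Proof.
move=> rep; rewrite /dsum_map.
have := epsilon_spec (inhabits ([::], fun=> 0)) (dsum_rep z) (ex_intro _ _ rep).
case: (epsilon _ _) => s' g' rep' /=.
rewrite (sum_count_mem _ (undup_uniq _) (@subset_undup_catl _ s s')).
rewrite (sum_count_mem _ (undup_uniq _) (@subset_undup_catr _ s s')).
apply: eq_big_seq => i; rewrite mem_undup => ss'i.
rewrite -(component_mapMn _ (rep.1 i)) -(component_mapMn _ (rep'.1 i)).
by rewrite (dsum_rep_coord rep rep').
Qed.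

Lemma dsum_mapD z z' : Z z -> Z z' -> dsum_map (z + z') = dsum_map z + dsum_map z'.
Proof.
move=> /dsum_repP[[s g] rep] /dsum_repP[[s' g'] rep'].
rewrite (dsum_map_rep (dsum_repD rep rep')) (dsum_map_rep rep) (dsum_map_rep rep').
rewrite (sum_count_mem _ (undup_uniq _) (@subset_undup_catl _ s s')).
rewrite (sum_count_mem _ (undup_uniq _) (@subset_undup_catr _ s s')) -big_split.
apply: eq_bigr => i _ /=; have sC := dsum_component_subgroup i.
have [Cg Cg'] := (rep.1 i, rep'.1 i).
by rewrite phD ?component_mapMn //; apply: subgroupMn.
Qed.

Variables (sigma : I -> I) (i0 : I).
Hypotheses (sigma_inj : injective sigma) (sigma_i0 : forall i, sigma i <> i0).
Hypothesis ph_C : forall i x, C i x -> C (sigma i) (ph i x).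
Hypothesis ph_inj : forall i x, C i x -> ph i x = 0 -> x = 0.

Lemma dsum_map_in z : Z z -> Z (dsum_map z).
Proof.
move=> /dsum_repP[[s g] rep]; rewrite (dsum_map_rep rep).
by apply: subgroup_sum dsum_subgroup _ => i _; apply: dsum_component_sub (ph_C (rep.1 i)).
Qed.

Lemma dsum_map_avoid z c : Z z -> C i0 c -> dsum_map z + c = 0 -> z = 0 /\ c = 0.
Proof.
move=> /dsum_repP[[s g] /dsum_rep_undup rep] Cc; rewrite (dsum_map_rep rep) => sum0.
pose iota o := if o is Some i then sigma i else i0.
have iota_inj : injective iota.
  by case=> [i|] [j|] //= => [/sigma_inj -> | /sigma_i0 | /esym/sigma_i0].
pose h o := if o is Some i then ph i (g i *+ count_mem i s) else c.
have r_uniq : uniq (None :: map Some (undup s)).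
  by rewrite /= (map_inj_uniq Some_inj) undup_uniq andbT; apply/mapP => -[].
have Ch o : C (iota o) (h o) by case: o => [i|] //=; apply: ph_C (rep.1 i).
have /(dsum_inj_eq0 iota_inj r_uniq Ch) h0 : \sum_(o <- None :: map Some (undup s)) h o = 0.
  by rewrite big_cons big_map addrC.
split; last exact: h0 None (mem_head _ _).
rewrite rep.2 big1_seq // => i /= si; apply: ph_inj (rep.1 i) _.
by apply: (h0 (Some i)); rewrite inE map_f.
Qed.

End DsumMap.

End DirectSums.

Lemma infinite_shift (I : Type) (e : nat -> I) :
  injective e -> exists sigma : I -> I, injective sigma /\ forall i, sigma i <> e 0%N.
Proof.
move=> e_inj; have e_cases i : (exists k, i = e k) \/ (forall k, e k <> i).
  have [[k <-]|no_k] := classic (exists k, e k = i); first by left; exists k.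
  by right=> k ek; apply: no_k; exists k.
pose R i j := (forall k, i = e k -> j = e k.+1) /\ ((forall k, e k <> i) -> j = i).
have [sigma sigmaR] : exists sigma, forall i, R i (sigma i).
  exists (fun i => epsilon (inhabits i) (R i)) => i; apply: epsilon_spec.
  case: (e_cases i) => [[k ->]|out_i]; last by exists i; split=> // k ik; case: (out_i k).
  by exists (e k.+1); split=> [k' /e_inj -> // | /(_ k)].
have sigma_e k : sigma (e k) = e k.+1 by apply: (sigmaR _).1.
have sigma_out i : (forall k, e k <> i) -> sigma i = i by apply: (sigmaR _).2.
exists sigma; split=> [i j|i].
  case: (e_cases i) => [[k ->]|out_i]; case: (e_cases j) => [[k' ->]|out_j].
  - by rewrite !sigma_e => /e_inj [->].
  - by rewrite sigma_e (sigma_out _ out_j) => ej; case: (out_j k.+1).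
  - by rewrite sigma_e (sigma_out _ out_i) => ei; case: (out_i k'.+1); rewrite ei.
  - by rewrite (sigma_out _ out_i) (sigma_out _ out_j).
case: (e_cases i) => [[k ->]|out_i]; first by rewrite sigma_e => /e_inj.
by rewrite (sigma_out _ out_i) => ei; case: (out_i 0%N).
Qed.

Section Shift.
Local Open Scope ring_scope.
Variable G : zmodType.

Definition homogeneous (I : Type) (C : I -> G -> Prop) :=
  exists a : I -> nat -> G,
    (forall i x, C i x <-> seq_span (a i) x) /\ forall i j, same_relations (a i) (a j).

(* The last clause says that [phi] is injective on [Z] and that its image
   meets [W] trivially. *)
Definition avoiding_endo (Z W : G -> Prop) (phi : G -> G) :=
  [/\ forall z z', Z z -> Z z' -> phi (z + z') = phi z + phi z',
      forall z, Z z -> Z (phi z) &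
      forall z w, Z z -> W w -> phi z + w = 0 -> z = 0 /\ w = 0].

Lemma dsum_shift (I : eqType) (C : I -> G -> Prop) Z (e : nat -> I) :
  internal_dsum C Z -> injective e -> homogeneous C ->
  exists phi, avoiding_endo Z (C (e 0%N)) phi.
Proof.
move=> dsumZ e_inj [a [Ca same_a]].
have [sigma [sigma_inj sigma_e0]] := infinite_shift e_inj.
pose ph i := span_map (a i) (a (sigma i)).
have phD i x y : C i x -> C i y -> ph i (x + y) = ph i x + ph i y.
  by move=> /Ca ax /Ca ay; apply: span_mapD.
have ph_C i x : C i x -> C (sigma i) (ph i x) by move=> _; apply/Ca/span_map_in.
have ph_inj i x : C i x -> ph i x = 0 -> x = 0 by move=> /Ca; apply: span_map_inj.
exists (dsum_map C ph); split.
- by move=> z z'; apply: dsum_mapD.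
- by move=> z; apply: (dsum_map_in dsumZ phD ph_C).
- by move=> z w; apply: (dsum_map_avoid dsumZ phD sigma_inj sigma_e0 ph_C ph_inj).
Qed.

Lemma homogeneous_cyclic (I : Type) (C : I -> G -> Prop) N :
  (forall i, cyclic_of_order (C i) N) -> homogeneous C.
Proof.
move=> cycC; pose P i c := elt_order c N /\ forall x, C i x <-> exists k, x = c *+ k.
pose gen i := epsilon (inhabits 0) (P i).
have genP i : P i (gen i) := epsilon_spec _ (P i) (cycC i).
exists (fun i _ => gen i); split=> [i x|i j].
  by rewrite (genP i).2; split=> [[k ->]|[_ [k ->]]]; [exists 0%N, k | exists k].
by apply: same_relations_const; apply: exact_order_elt; [apply: (genP i).1 | apply: (genP j).1].
Qed.

Lemma homogeneous_pruefer p (I : Type) (C : I -> G -> Prop) :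
  prime p -> (forall i, pruefer p (C i)) -> homogeneous C.
Proof.
move=> p_pr prC.
pose P i (c : nat -> G) := [/\ c 0%N = 0, c 1%N <> 0, forall k, c k.+1 *+ p = c k &
  forall x, C i x <-> seq_span c x].
pose gen i := epsilon (inhabits (fun=> 0)) (P i).
have genP i : P i (gen i).
  by apply: epsilon_spec; have [c [c0 [c1 [cS Cc]]]] := prC i; exists c.
exists gen; split=> [i|i j]; first by have [_ _ _] := genP i.
have [c0 c1 cS _] := genP i; have [d0 d1 dS _] := genP j.
exact: same_relations_pruefer p_pr c0 c1 cS d0 d1 dS.
Qed.

End Shift.

Section Summands.
Local Open Scope ring_scope.
Variable G : zmodType.

Lemma addrACA3 (a a' b b' c c' : G) :
  a + a' + (b + b') + (c + c') = a + b + c + (a' + b' + c').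
Proof. by rewrite (addrACA a a' b b') (addrACA (a + b)). Qed.

Lemma internal_sum2_eq (K K' X : G -> Prop) k1 k1' k2 k2' : internal_sum2 K K' X ->
  K k1 -> K' k1' -> K k2 -> K' k2' -> k1 + k1' = k2 + k2' -> k1 = k2 /\ k1' = k2'.
Proof.
move=> [sK [sK' [KK'0 _]]] Kk1 K'k1' Kk2 K'k2' e.
have d0 : k1 - k2 = k2' - k1'.
  by apply/eqP; rewrite subr_eq addrAC eq_sym subr_eq addrC e.
have /eqP : k1 - k2 = 0.
  by apply: KK'0; [exact: subgroupB sK Kk1 Kk2 | rewrite d0; exact: subgroupB sK' K'k2' K'k1'].
by rewrite subr_eq0 => /eqP k12; split=> //; move: e; rewrite k12 => /addrI.
Qed.

Lemma internal_sum2_eq0 (K K' X : G -> Prop) k k' : internal_sum2 K K' X ->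
  K k -> K' k' -> k + k' = 0 -> k = 0 /\ k' = 0.
Proof.
move=> sumKK' Kk K'k' e; have [sK [sK' _]] := sumKK'.
apply: (internal_sum2_eq sumKK') => //; last by rewrite addr0.
  exact: subgroup0 sK.
exact: subgroup0 sK'.
Qed.

Definition dsum3 (L Y Z : G -> Prop) := [/\ subgroup L, subgroup Y, subgroup Z,
  forall g, exists l y z, [/\ L l, Y y, Z z & g = l + y + z] &
  forall l y z, L l -> Y y -> Z z -> l + y + z = 0 -> [/\ l = 0, y = 0 & z = 0]].

Lemma dsum3_of (X Y Z : G -> Prop) :
  direct_summand X -> internal_sum2 Y Z X -> exists L, dsum3 L Y Z.
Proof.
move=> [L sumXL] sumYZ; have [_ [sL [_ XL_all]]] := sumXL.
have [sY [sZ [_ X_YZ]]] := sumYZ.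
exists L; split=> // [g|l y z Ll Yy Zz].
  have [x [l [Xx [Ll ->]]]] := (XL_all g).1 I; have [y [z [Yy [Zz ->]]]] := (X_YZ x).1 Xx.
  by exists l, y, z; split=> //; rewrite addrC addrA.
rewrite -addrA addrC => yzl0.
have Xyz : X (y + z) by apply/X_YZ; exists y, z.
by have [/(internal_sum2_eq0 sumYZ Yy Zz) [-> ->] ->] := internal_sum2_eq0 sumXL Xyz Ll yzl0.
Qed.

Section Dsum3.
Variables L Y Z : G -> Prop.
Hypothesis d3 : dsum3 L Y Z.

Lemma dsum3_eq l y z l' y' z' : L l -> Y y -> Z z -> L l' -> Y y' -> Z z' ->
  l + y + z = l' + y' + z' -> [/\ l = l', y = y' & z = z'].
Proof.
have [sL sY sZ _ d3_0] := d3 => Ll Yy Zz Ll' Yy' Zz' e.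
have := d3_0 _ _ _ (subgroupB sL Ll Ll') (subgroupB sY Yy Yy') (subgroupB sZ Zz Zz').
rewrite (addrACA l) (addrACA (l + y)) -!opprD e subrr => /(_ erefl).
by case=> /subr0_eq -> /subr0_eq -> /subr0_eq ->.
Qed.

Lemma dsum3_height t N q : Y t -> exact_order t N -> (forall y, Y y -> y *+ q = 0) ->
  forall c d g, t *+ c = t *+ d + g *+ q -> c = d %[mod N].
Proof.
have [sL sY sZ d3_all _] := d3 => Yt ot Yq c d g.
have [l [y [z [Ll Yy Zz ->]]]] := d3_all g; rewrite !mulrnDl (Yq y Yy) addr0 => e.
have e' : 0 + t *+ c + 0 = l *+ q + t *+ d + z *+ q by rewrite add0r addr0 e addrCA addrA.
have [_ tcd _] := dsum3_eq (subgroup0 sL) (subgroupMn c sY Yt) (subgroup0 sZ)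
  (subgroupMn q sL Ll) (subgroupMn d sY Yt) (subgroupMn q sZ Zz) e'.
exact/(exact_order_eq c d ot).
Qed.

Definition decomp3 g (r : G * G * G) :=
  [/\ L r.1.1, Y r.1.2, Z r.2 & g = r.1.1 + r.1.2 + r.2].

Definition proj3 g := epsilon (inhabits (0, 0, 0)) (decomp3 g).
Definition projL g := (proj3 g).1.1.
Definition projY g := (proj3 g).1.2.
Definition projZ g := (proj3 g).2.

Lemma projP g : [/\ L (projL g), Y (projY g), Z (projZ g) & g = projL g + projY g + projZ g].
Proof.
have [_ _ _ d3_all _] := d3; have [l [y [z dec]]] := d3_all g.
exact: epsilon_spec _ (decomp3 g) (ex_intro _ (l, y, z) dec).
Qed.

Lemma projD g g' : [/\ projL (g + g') = projL g + projL g',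
  projY (g + g') = projY g + projY g' & projZ (g + g') = projZ g + projZ g'].
Proof.
have [sL sY sZ _ _] := d3.
have [Ll Yy Zz eg] := projP g; have [Ll' Yy' Zz' eg'] := projP g'.
have [Ll'' Yy'' Zz'' egg'] := projP (g + g').
apply: dsum3_eq => //; try exact: subgroupD.
by rewrite addrACA3 -eg -eg' -egg'.
Qed.

Lemma dsum3_embed_shiftZ p t w W phi : prime p -> p_group G p ->
  Y t -> t *+ p = 0 -> subgroup W -> (forall x, W x -> Z x) -> W w -> w *+ p <> 0 ->
  avoiding_endo Z W phi -> exists f, inj_hom_to_quotient (multiples (t + w)) f.
Proof.
move=> p_pr pG Yt tp sW WZ Ww wp [phiD phiZ phi_avoid]; have [sL sY _ _ _] := d3.
exists (fun g => projL g + projY g + phi (projZ g)); split=> [x x'|g [i fg]].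
  have [_ _ Zx _] := projP x; have [_ _ Zx' _] := projP x'.
  by exists 0%N; have [-> -> ->] := projD x x'; rewrite phiD // addrACA3 subrr mulr0n.
have [Lg Yg Zg ->] := projP g; have Wwi := subgroupMn i sW Ww.
have fgE : projL g + projY g + phi (projZ g) = 0 + t *+ i + w *+ i.
  by rewrite fg add0r mulrnDl.
have [-> -> phiZg] :=
  dsum3_eq Lg Yg (phiZ _ Zg) (subgroup0 sL) (subgroupMn i sY Yt) (WZ _ Wwi) fgE.
have phiZg0 : phi (projZ g) + - (w *+ i) = 0 by rewrite phiZg subrr.
have [-> /eqP] := phi_avoid _ _ Zg (subgroupN sW Wwi) phiZg0.
rewrite oppr_eq0 => /eqP wi0.
have p_i : (p %| i)%N.
  by apply/negPn/negP => /(pgroup_coprime_eq0 p_pr pG wi0) w0; apply: wp; rewrite w0 mul0rn.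
by rewrite (mulrn_dvdn_eq0 tp p_i) !addr0.
Qed.

Lemma dsum3_embed_shiftY_rootZ p t u W phi : W t -> exact_order t p -> subgroup W ->
  (forall x, W x -> Y x) -> avoiding_endo Y W phi -> Z u -> u *+ (p * p) = 0 ->
  (forall z, Z z -> exists2 r, Z r & r *+ p = z) ->
  (forall z, Z z -> z *+ p = 0 -> multiples (u *+ p) z) ->
  exists f, inj_hom_to_quotient (multiples (t + u)) f.
Proof.
move=> Wt ot sW WY [phiD phiY phi_avoid] Zu upp Zdiv Zsocle; have [sL _ sZ _ _] := d3.
pose root z := epsilon (inhabits 0) (fun r => Z r /\ r *+ p = z).
have rootP z : Z z -> Z (root z) /\ root z *+ p = z.
  move=> /Zdiv[r Zr rp]; apply: (epsilon_spec _ (fun r => Z r /\ r *+ p = z)).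
  by exists r.
have tp : t *+ p = 0 by apply/ot.
exists (fun g => projL g + phi (projY g) + root (projZ g)); split=> [x x'|g [i fg]].
  have [_ Yx Zx _] := projP x; have [_ Yx' Zx' _] := projP x'.
  have [[Zr rp] [Zr' rp']] := (rootP _ Zx, rootP _ Zx').
  have [Zr'' rp''] := rootP _ (subgroupD sZ Zx Zx').
  have [-> -> ->] := projD x x'; rewrite phiD //.
  (* The defect of [root] is killed by [p], so it is a multiple of
     [u *+ p = (t + u) *+ p]. *)
  set d := root (projZ x + projZ x') - (root (projZ x) + root (projZ x')).
  have Zd : Z d by apply: (subgroupB sZ Zr''); apply: subgroupD.
  have dp : d *+ p = 0 by rewrite mulrnBl mulrnDl rp rp' rp'' subrr.
  have [q dq] := Zsocle _ Zd dp.
  exists (p * q)%N; rewrite mulrnA mulrnDl tp add0r -dq.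
  by rewrite -addrACA3 opprD addrACA subrr add0r.
have [Lg Yg Zg ->] := projP g; have [Zr rp] := rootP _ Zg; have Wti := subgroupMn i sW Wt.
have fgE : projL g + phi (projY g) + root (projZ g) = 0 + t *+ i + u *+ i.
  by rewrite fg add0r mulrnDl.
have [-> phiYg rZg] :=
  dsum3_eq Lg (phiY _ Yg) Zr (subgroup0 sL) (WY _ Wti) (subgroupMn i sZ Zu) fgE.
have phiYg0 : phi (projY g) + - (t *+ i) = 0 by rewrite phiYg subrr.
have [-> /eqP] := phi_avoid _ _ Yg (subgroupN sW Wti) phiYg0.
rewrite oppr_eq0 => /eqP /ot /dvdnP[k ik].
by rewrite -rp rZg ik -mulrnA (mulrn_dvdn_eq0 upp) ?addr0 // -mulnA dvdn_mull.
Qed.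

End Dsum3.
End Summands.

Section NotSGB.
Local Open Scope ring_scope.
Variable G : zmodType.

Lemma summand_of_essential_multiples p q (t v : G) K K' :
  prime p -> p_group G p -> t *+ p = 0 ->
  (forall c d g, t *+ c = t *+ d + g *+ q -> c = d %[mod p]) ->
  internal_sum2 K K' (fun=> True) -> essential (multiples (t + v *+ q)) K -> K' (v *+ q).
Proof.
move=> p_pr pG tp t_ht sumKK' [HK ess]; have [sK [sK' [_ KK'_all]]] := sumKK'.
(* With t = s + s' and v = e + e' along K (+) K', a non-zero element of
   <t + v q> in <s> yields, by the hypothesis on t, that e q = 0. *)
set h := t + v *+ q; have Kh : K h by apply: HK; exists 1%N.
have [s [s' [Ks [K's' ts]]]] := (KK'_all t).1 I.
have [e [e' [Ke [K'e' ve]]]] := (KK'_all v).1 I.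
have s'E : s' = - (e' *+ q).
  have hE : s + e *+ q + (s' + e' *+ q) = h + 0 by rewrite addr0 /h ts ve mulrnDl addrACA.
  have [_ /eqP] := internal_sum2_eq sumKK' (subgroupD sK Ks (subgroupMn q sK Ke))
    (subgroupD sK' K's' (subgroupMn q sK' K'e')) Kh (subgroup0 sK') hE.
  by rewrite addr_eq0 => /eqP.
have sE : s = t + e' *+ q by rewrite ts s'E subrK.
have sp : s *+ p = 0.
  have : s *+ p + s' *+ p = 0 by rewrite -mulrnDl -ts.
  by case/(internal_sum2_eq0 sumKK' (subgroupMn p sK Ks) (subgroupMn p sK' K's')).
have s_neq0 : s <> 0.
  move=> s0; have t_eq : t *+ 1 = t *+ 0 + (- e') *+ q.
    by rewrite mulr1n mulr0n add0r mulNrn; apply/eqP; rewrite -addr_eq0 -sE s0.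
  by move: (t_ht _ _ _ t_eq); rewrite mod0n modn_small // prime_gt1.
have sS := subgroup_multiples (prime_gt0 p_pr) sp.
have SK x : multiples s x -> K x by move=> [j ->]; apply: subgroupMn.
have nz : exists x, multiples s x /\ x <> 0 by exists s; split=> //; exists 1%N.
have [_ [[i ->] [[j hij] hi0]]] := ess _ sS SK nz.
have tj : t *+ j = t *+ i + (v *+ i - e' *+ j) *+ q.
  by rewrite mulrnBl (mulrnAC v) (mulrnAC e') addrA -mulrnDl -/h hij sE mulrnDl addrK.
have sji : s *+ j = s *+ i by rewrite (mulrn_modn _ sp) (t_ht _ _ _ tj) -(mulrn_modn _ sp).
have p_ndvd_i : ~~ (p %| i)%N.
  by apply/negP => /(mulrn_dvdn_eq0 sp) si0; apply: hi0; rewrite hij sji.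
have eqi0 : e *+ q *+ i = 0.
  have -> : e *+ q = h - s by rewrite /h sE ve mulrnDl opprD addrACA subrr add0r addrK.
  by rewrite mulrnBl hij sji subrr.
by rewrite ve mulrnDl (pgroup_coprime_eq0 p_pr pG eqi0 p_ndvd_i) add0r; apply: subgroupMn.
Qed.

Lemma not_sgB_of_embedding p q (t v : G) : prime p -> p_group G p -> t *+ p = 0 ->
  (forall c d g, t *+ c = t *+ d + g *+ q -> c = d %[mod p]) -> v *+ q *+ p <> 0 ->
  (exists f, inj_hom_to_quotient (multiples (t + v *+ q)) f) -> ~ semi_generalized_Bassian G.
Proof.
move=> p_pr pG tp t_ht wp emb sgB.
have sH : subgroup (multiples (t + v *+ q)).
  by have [k hk] := pG (t + v *+ q); apply: subgroup_multiples hk; rewrite expn_gt0 prime_gt0.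
have [K [[K' sumKK'] essH]] := sgB _ sH emb; have [_ [sK' [KK'0 _]]] := sumKK'.
have K'w := summand_of_essential_multiples p_pr pG tp t_ht sumKK' essH.
have Kwp : K (v *+ q *+ p) by apply: essH.1; exists p; rewrite mulrnDl tp add0r.
exact/wp/KK'0/(subgroupMn p sK' K'w).
Qed.

Lemma not_sgB_shiftZ p n L Y Z (I : eqType) (C : I -> G -> Prop) (e : nat -> I) (y v : G) :
  prime p -> p_group G p -> dsum3 L Y Z ->
  Y y -> (forall x, Y x -> x *+ p ^ n.+1 = 0) -> y *+ p ^ n <> 0 ->
  internal_dsum C Z -> injective e -> homogeneous C -> C (e 0%N) v -> v *+ p ^ n.+2 <> 0 ->
  ~ semi_generalized_Bassian G.
Proof.
move=> p_pr pG d3 Yy Yexp ypn dsumZ e_inj homC Cv vpn; have [_ sY _ _ _] := d3.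
have sC := dsum_component_subgroup dsumZ (e 0%N).
have [phi avoid] := dsum_shift dsumZ e_inj homC.
have tp : y *+ p ^ n *+ p = 0 by rewrite -mulrnA -expnSr Yexp.
have ot := exact_order_prime p_pr tp ypn.
have Yt := subgroupMn (p ^ n) sY Yy.
have wp : v *+ p ^ n.+1 *+ p <> 0 by rewrite -mulrnA -expnSr.
apply: (not_sgB_of_embedding p_pr pG tp (dsum3_height d3 Yt ot Yexp) wp).
exact: (dsum3_embed_shiftZ d3 p_pr pG Yt tp sC (@dsum_component_sub _ _ _ _ dsumZ (e 0%N))
  (subgroupMn (p ^ n.+1) sC Cv) wp avoid).
Qed.

Lemma not_sgB_shiftY_pruefer p n L Y Z (I : eqType) (C : I -> G -> Prop) (e : nat -> I) (y : G) :
  prime p -> p_group G p -> dsum3 L Y Z ->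
  internal_dsum C Y -> injective e -> homogeneous C -> C (e 0%N) y ->
  (forall x, Y x -> x *+ p ^ n.+1 = 0) -> y *+ p ^ n <> 0 -> pruefer p Z ->
  ~ semi_generalized_Bassian G.
Proof.
move=> p_pr pG d3 dsumY e_inj homC Cy Yexp ypn [c [c0 [c1 [cS Zc]]]].
have sC := dsum_component_subgroup dsumY (e 0%N).
have [phi avoid] := dsum_shift dsumY e_inj homC.
have Yy := dsum_component_sub dsumY Cy.
have tp : y *+ p ^ n *+ p = 0 by rewrite -mulrnA -expnSr Yexp.
have ot := exact_order_prime p_pr tp ypn.
have Ct := subgroupMn (p ^ n) sC Cy.
have ht := dsum3_height d3 (dsum_component_sub dsumY Ct) ot Yexp.
have vq : c n.+3 *+ p ^ n.+1 = c 2%N by rewrite -(pruefer_mulrn cS 2 n.+1) add2n.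
have Zu : Z (c 2%N) by apply/Zc; exists 2%N, 1%N; rewrite mulr1n.
have upp : c 2%N *+ (p * p) = 0 by rewrite mulrnA !cS c0.
have Zdiv z : Z z -> exists2 r, Z r & r *+ p = z.
  by move=> /Zc /(pruefer_divisible cS) [r /Zc Zr rp]; exists r.
have Zsocle z : Z z -> z *+ p = 0 -> multiples (c 2%N *+ p) z.
  by rewrite cS => /Zc; apply: pruefer_socle.
have wp : c n.+3 *+ p ^ n.+1 *+ p <> 0 by rewrite vq cS.
apply: (not_sgB_of_embedding p_pr pG tp ht wp); rewrite vq.
exact: (dsum3_embed_shiftY_rootZ d3 Ct ot sC (@dsum_component_sub _ _ _ _ dsumY (e 0%N))
  avoid Zu upp Zdiv Zsocle).
Qed.

End NotSGB.

Unset Implicit Arguments.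

Theorem lemma2p10 (p : nat) (G : zmodType) (X Y Z : G -> Prop) (n : nat) :
  prime p -> p_group G p -> (0 < n)%N ->
  direct_summand X -> internal_sum2 Y Z X ->
  ( (* case (a) *)
    (cyclic_of_order Y (p ^ n) /\
     ((exists m : nat, (n + 2 <= m)%N /\
         inf_dsum_of (fun C => cyclic_of_order C (p ^ m)) Z) \/
      inf_dsum_of (pruefer p) Z))
  \/ (* case (b) *)
    (inf_dsum_of (fun C => cyclic_of_order C (p ^ n)) Y /\ pruefer p Z) ) ->
  ~ semi_generalized_Bassian G.
Proof.
move=> p_pr pG n_gt0 sumX sumYZ cases; have [L d3] := dsum3_of sumX sumYZ.
have pow_lt k l : (k < l)%N -> (0 < p ^ k < p ^ l)%N.
  by move=> lt_kl; rewrite expn_gt0 prime_gt0 // ltn_exp2l // prime_gt1.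
case: n n_gt0 cases => // n _ [[cycY cases_Z] | [[I [C [[e e_inj] [dsumY cycC]]]] prZ]].
  have [y Yy ypn] := cyclic_of_order_gen cycY (pow_lt _ _ (ltnSn n)).
  have Yexp := cyclic_of_order_exponent cycY.
  case: cases_Z => [[m [le_m [I [C [[e e_inj] [dsumZ cycC]]]]]] | [I [C [[e e_inj] [dsumZ prC]]]]].
    rewrite addn2 in le_m.
    have [v Cv vpn] := cyclic_of_order_gen (cycC (e 0%N)) (pow_lt n.+2 m le_m).
    exact: not_sgB_shiftZ p_pr pG d3 Yy Yexp ypn dsumZ e_inj (homogeneous_cyclic cycC) Cv vpn.
  have [v Cv vpn] := pruefer_gen n.+2 (prC (e 0%N)).
  exact: not_sgB_shiftZ p_pr pG d3 Yy Yexp ypn dsumZ e_inj (homogeneous_pruefer p_pr prC) Cv vpn.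
have [y Cy ypn] := cyclic_of_order_gen (cycC (e 0%N)) (pow_lt _ _ (ltnSn n)).
have Yexp := dsum_exponent dsumY (fun i => cyclic_of_order_exponent (cycC i)).
exact: not_sgB_shiftY_pruefer p_pr pG d3 dsumY e_inj (homogeneous_cyclic cycC) Cy Yexp ypn prZ.
Qed.
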